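(* Let $\star$ be a star operation on an integral domain $R$. If every nonzero finitely generated ideal of $R$ is $\star$-basic (the finite $\star$-basic ideal property), then $R$ is integrally closed.
   Context: A star operation on a domain $R$ with quotient field $K$ is a map $I\mapsto I^\star$ on nonzero fractional ideals with $(aI)^\star=aI^\star$ ($0\ne a\in K$), $R^\star=R$, $I\subseteq I^\star$, $I\subseteq J\Rightarrow I^\star\subseteq J^\star$, $I^{\star\star}=I^\star$. For a nonzero ideal $I$, an ideal $J\subseteq I$ is a $\star$-reduction of $I$ if $(JI^n)^\star=(I^{n+1})^\star$ for some integer $n\ge0$; $I$ is $\star$-basic if every $\star$-reduction $J$ of $I$ satisfies $J^\star=I^\star$. *)

From HB Require Import structures.
From mathcomp Require Import all_boot all_order all_algebra.
From mathcomp Require Import fraction.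
Set Implicit Arguments. Unset Strict Implicit. Unset Printing Implicit Defensive.
Import GRing.Theory.
Local Open Scope ring_scope.

Section StarDefs.
Variable R : idomainType.

Definition K := {fraction R}.
Definition emb (r : R) : K := @FracField.tofrac R r.

(* Subsets of K (fractional ideals, ideals of R identified with their image). *)
Definition kset := K -> Prop.

Definition subset (A B : kset) : Prop := forall x, A x -> B x.
Definition seteq (A B : kset) : Prop := forall x, A x <-> B x.

Definition Rset : kset := fun x => exists r : R, x = emb r.

Definition nonzeroset (A : kset) : Prop := exists x, A x /\ x != 0.

Definition submodule (A : kset) : Prop :=
  [/\ A 0, (forall x y, A x -> A y -> A (x + y))
    & (forall (r : R) x, A x -> A (emb r * x))].

Definition frac_ideal (A : kset) : Prop :=
  [/\ submodule A, nonzeroset A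
    & exists d : R, d != 0 /\ forall x, A x -> Rset (emb d * x)].

Definition ideal (A : kset) : Prop := submodule A /\ subset A Rset.

Definition fin_gen (A : kset) : Prop :=
  exists s : seq K, (forall a, a \in s -> Rset a) /\
    seteq A (fun x => exists c : 'I_(size s) -> R,
                        x = \sum_(i < size s) emb (c i) * s`_i).

Definition scaleset (a : K) (A : kset) : kset := fun x => exists y, A y /\ x = a * y.

Definition mulset (A B : kset) : kset := fun x =>
  exists s : seq (K * K), (forall p, p \in s -> A p.1 /\ B p.2) /\
    x = \sum_(p <- s) p.1 * p.2.

Definition powset (A : kset) (n : nat) : kset := iter n (mulset A) Rset.

(* star operation on R (the map is only constrained on nonzero fractional ideals) *)
Definition is_star (st : kset -> kset) : Prop :=
  [/\ (forall (a : K) A, a != 0 -> frac_ideal A ->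
          seteq (st (scaleset a A)) (scaleset a (st A))),
      seteq (st Rset) Rset,
      (forall A, frac_ideal A -> subset A (st A)),
      (forall A B, frac_ideal A -> frac_ideal B -> subset A B ->
          subset (st A) (st B))
    & (forall A, frac_ideal A -> seteq (st (st A)) (st A))].

Definition star_reduction (st : kset -> kset) (J I : kset) : Prop :=
  [/\ ideal J, nonzeroset J, subset J I
    & exists n : nat, seteq (st (mulset J (powset I n))) (st (powset I n.+1))].

Definition star_basic (st : kset -> kset) (I : kset) : Prop :=
  forall J, star_reduction st J I -> seteq (st J) (st I).

Definition integrally_closed : Prop :=
  forall x : K, (exists p : {poly R}, p \is monic /\ root (map_poly emb p) x) ->
    Rset x.

End StarDefs.

(** If [x = a/b] is a root of a monic polynomial of size [N] over [R], the
    [R]-module [E] spanned by [1, x, ..., x^(N-1)] is a ring (reduce modulo the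
    polynomial) and [c = b^N] maps it into [R]. So [I = cE] is a finitely
    generated ideal with [(cR) I = c^2 E = I^2]: [cR] is a [*]-reduction of [I],
    and [*]-basicness gives [cx ∈ I ⊆ I^* = (cR)^* = cR], whence [x ∈ R]. *)

From Pilot Require Import Defs.
From HB Require Import structures.
From mathcomp Require Import all_boot all_order all_algebra.
From mathcomp Require Import fraction generic_quotient.
From Stdlib Require Import FunctionalExtensionality PropExtensionality.
Set Implicit Arguments. Unset Strict Implicit. Unset Printing Implicit Defensive.
Import GRing.Theory.
Local Open Scope ring_scope.

Section FractionalIdeals.
Variable R : idomainType.
Implicit Types (A B T : kset R) (a c u v y : K R).

Lemma frac_repr (x : K R) : exists a b : R, b != 0 /\ x = emb a / emb b.
Proof.
elim/quotW: x => r; have hd := denom_ratioP r.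
exists (\n_r), (\d_r); split=> //; rewrite /emb !piE; apply/eqmodP.
rewrite /= FracField.equivfE /FracField.mulf /FracField.invf.
rewrite !(numer_Ratio _ (oner_neq0 _), denom_Ratio _ (oner_neq0 _)) (numer_Ratio _ hd).
by rewrite (denom_Ratio _ hd) mul1r mulr1 (numer_Ratio _ hd) (denom_Ratio _ hd) mulrC.
Qed.

Lemma seteq_eq A B : seteq A B -> A = B.
Proof.
by move=> eqAB; apply: functional_extensionality => y; apply: propositional_extensionality.
Qed.

Lemma Rset_emb (r : R) : Rset (emb r).
Proof. by exists r. Qed.

Lemma Rset1 : @Rset R 1.
Proof. by exists 1; rewrite /emb rmorph1. Qed.

Lemma RsetM u v : Rset u -> Rset v -> Rset (u * v).
Proof. by move=> [r ->] [t ->]; exists (r * t); rewrite /emb rmorphM. Qed.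

Lemma submodule_Rset : submodule (@Rset R).
Proof.
split; first by exists 0; rewrite /emb rmorph0.
  by move=> _ _ [r ->] [t ->]; exists (r + t); rewrite /emb rmorphD.
by move=> r y; apply: RsetM; exact: Rset_emb.
Qed.

Lemma frac_ideal_ideal A : ideal A -> nonzeroset A -> frac_ideal A.
Proof.
move=> [subA AR] nzA; split=> //; exists 1; split; first exact: oner_neq0.
by move=> y /AR; rewrite /emb rmorph1 mul1r.
Qed.

Lemma frac_ideal_Rset : frac_ideal (@Rset R).
Proof.
apply: frac_ideal_ideal; first by split; [exact: submodule_Rset | by []].
by exists 1; split; [exact: Rset1 | exact: oner_neq0].
Qed.

Lemma submodule_scaleset a A : submodule A -> submodule (scaleset a A).
Proof.
move=> [A0 AD AM]; split; first by exists 0; rewrite mulr0.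
  by move=> _ _ [y [Ay ->]] [z [Az ->]]; exists (y + z); rewrite mulrDr; split; auto.
by move=> r _ [y [Ay ->]]; exists (emb r * y); rewrite mulrCA; split; auto.
Qed.

Lemma scaleset_Rset_ideal (r : R) : ideal (scaleset (emb r) (@Rset R)).
Proof.
split; first exact/submodule_scaleset/submodule_Rset.
by move=> _ [y [Ry ->]]; apply: RsetM => //; exact: Rset_emb.
Qed.

Lemma mulset_pair A B u v : A u -> B v -> mulset A B (u * v).
Proof.
move=> Au Bv; exists [:: (u, v)]; rewrite big_seq1; split=> // q.
by rewrite mem_seq1 => /eqP ->.
Qed.

Lemma mulset_sub A B T : T 0 -> (forall u v, T u -> T v -> T (u + v)) ->
  (forall u v, A u -> B v -> T (u * v)) -> Defs.subset (mulset A B) T.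
Proof.
move=> T0 TD TM _ [s [sAB ->]]; elim: s sAB => [|q s IHs] sAB.
  by rewrite big_nil.
rewrite big_cons; apply: TD; last by apply: IHs => q' sq'; apply: sAB; rewrite inE sq' orbT.
by have [] := sAB q (mem_head _ _); apply: TM.
Qed.

Lemma mulset0 A B : mulset A B 0.
Proof. by exists [::]; rewrite big_nil. Qed.

Lemma mulsetD A B u v : mulset A B u -> mulset A B v -> mulset A B (u + v).
Proof.
move=> [s [sAB ->]] [t [tAB ->]]; exists (s ++ t); rewrite big_cat; split=> // q.
by rewrite mem_cat => /orP [/sAB | /tAB].
Qed.

Lemma mulsetC A B : mulset A B = mulset B A.
Proof.
suff incl A' B' : Defs.subset (mulset A' B') (mulset B' A').
  by apply: seteq_eq => y; split; apply: incl.
move=> _ [s [sAB ->]]; exists [seq (q.2, q.1) | q <- s]; split.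
  by move=> _ /mapP [q sq ->] /=; have [] := sAB q sq.
by rewrite big_map; apply: eq_bigr => q _; rewrite mulrC.
Qed.

Lemma mulsetR A : submodule A -> mulset A (@Rset R) = A.
Proof.
move=> [A0 AD AM]; apply: seteq_eq => y; split; last first.
  by move=> Ay; rewrite -[y]mulr1; apply: mulset_pair => //; exact: Rset1.
by apply: mulset_sub => // u _ Au [r ->]; rewrite mulrC; apply: AM.
Qed.

Lemma mulset_scaleset a c A B :
  mulset (scaleset a A) (scaleset c B) = scaleset (a * c) (mulset A B).
Proof.
apply: seteq_eq => y; split.
  apply: mulset_sub.
  - by exists 0; split; [exact: mulset0 | rewrite mulr0].
  - by move=> _ _ [u [ABu ->]] [v [ABv ->]]; exists (u + v); rewrite mulrDr; split;
      [exact: mulsetD |].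
  - move=> _ _ [u [Au ->]] [v [Bv ->]]; exists (u * v); split; first exact: mulset_pair.
    by rewrite mulrACA.
move=> [_ [[s [sAB ->]] ->]]; exists [seq (a * q.1, c * q.2) | q <- s]; split.
  by move=> _ /mapP [q sq ->] /=; have [Aq Bq] := sAB q sq; split; [exists q.1 | exists q.2].
by rewrite big_map mulr_sumr; apply: eq_bigr => q _; rewrite mulrACA.
Qed.

Lemma scaleset_ring_reduction c A : submodule A -> mulset A A = A ->
  mulset (scaleset c (@Rset R)) (powset (scaleset c A) 1) = powset (scaleset c A) 2.
Proof.
move=> subA ringA; have pow1 : powset (scaleset c A) 1 = scaleset c A.
  exact/mulsetR/submodule_scaleset.
have pow2 : powset (scaleset c A) 2 = mulset (scaleset c A) (scaleset c A) :=
  congr1 (mulset (scaleset c A)) pow1.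
by rewrite pow2 pow1 !mulset_scaleset ringA mulsetC mulsetR.
Qed.

Lemma star_scaleset_Rset (st : kset R -> kset R) c : is_star st -> c != 0 ->
  st (scaleset c (@Rset R)) = scaleset c (@Rset R).
Proof.
move=> [stM stR _ _ _] c0; apply: seteq_eq => y.
rewrite (stM _ _ c0 frac_ideal_Rset) /scaleset.
by split=> -[z [Rz ->]]; exists z; split=> //; apply/stR.
Qed.

End FractionalIdeals.

Definition evalset (R : idomainType) (x : K R) (n : nat) : kset R :=
  fun y => exists q : {poly R}, (size q <= n)%N /\ y = (map_poly (@emb R) q).[x].

Section Evalset.
Variable R : idomainType.
Variables (x : K R) (n : nat).
Local Notation E := (evalset x n).

Lemma map_poly_emb_coef (q : {poly R}) i : (map_poly (@emb R) q)`_i = emb q`_i.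
Proof. by rewrite coef_map_id0 // /emb rmorph0. Qed.

Lemma size_map_poly_emb (q : {poly R}) : size (map_poly (@emb R) q) = size q.
Proof.
apply: size_map_inj_poly; last by rewrite /emb rmorph0.
by move=> u v /eqP; rewrite tofrac_eq => /eqP.
Qed.

Lemma submodule_evalset : submodule E.
Proof.
split; first by exists 0; rewrite size_poly0 map_poly0 horner0.
  move=> _ _ [q1 [sq1 ->]] [q2 [sq2 ->]]; exists (q1 + q2); split.
    by rewrite (leq_trans (size_polyD _ _)) // geq_max sq1 sq2.
  by rewrite /emb rmorphD hornerD.
move=> r _ [q [sq ->]]; exists (r *: q); split; first exact: leq_trans (size_scale_leq _ _) sq.
by rewrite /emb map_polyZ hornerZ.
Qed.

Lemma evalset_emb (r : R) : (0 < n)%N -> E (emb r).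
Proof.
move=> n_gt0; exists r%:P; split; first by rewrite (leq_trans (size_polyC_leq1 _)).
by rewrite /emb map_polyC hornerC.
Qed.

Lemma evalset1 : (0 < n)%N -> E 1.
Proof. by rewrite -(rmorph1 (@FracField.tofrac R)); exact: evalset_emb. Qed.

Lemma evalset_exp i : (i < n)%N -> E (x ^+ i).
Proof.
by move=> lt_in; exists 'X^i; rewrite size_polyXn /emb map_polyXn hornerXn.
Qed.

Lemma fin_gen_scale_evalset c :
  Defs.subset (scaleset c E) (@Rset R) -> fin_gen (scaleset c E).
Proof.
move=> cER; pose s := [seq c * x ^+ i | i <- iota 0 n].
have size_s : size s = n by rewrite size_map size_iota.
exists s; split.
  move=> u /mapP [i]; rewrite mem_iota add0n => /andP [_ lt_in] ->.
  by apply: cER; exists (x ^+ i); split=> //; exact: evalset_exp.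
have scale_horner (q : {poly R}) : (size q <= n)%N ->
    c * (map_poly (@emb R) q).[x] = \sum_(i < size s) emb q`_i * s`_i.
  move=> sq; rewrite size_s (horner_coef_wide _ (n := n)) ?size_map_poly_emb //.
  rewrite mulr_sumr; apply: eq_bigr => i _.
  by rewrite (nth_map 0%N) ?size_iota // nth_iota // add0n map_poly_emb_coef mulrCA.
move=> y; split.
  move=> [_ [[q [sq ->]] ->]]; exists (fun i => q`_i); exact: scale_horner.
move=> [d ->]; pose q := \poly_(i < n) (if insub i is Some j then d j else 0).
have sq : (size q <= n)%N by exact: size_poly.
exists ((map_poly (@emb R) q).[x]); split; first by exists q.
rewrite scale_horner //; apply: eq_bigr => i _; congr (emb _ * _).
rewrite coef_poly -{1}size_s ltn_ord insubT /=; first exact: ltn_ord.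
by move=> lt_is; congr d; apply: val_inj.
Qed.

End Evalset.

Lemma emb_denom_exp (R : idomainType) (a b : R) n i : b != 0 -> (i <= n)%N ->
  emb (b ^+ n) * (emb a / emb b) ^+ i = emb (a ^+ i * b ^+ (n - i)).
Proof.
move=> b0 le_in; have bi0 : emb b ^+ i != 0 by rewrite expf_neq0 // /emb tofrac_eq0.
rewrite -{1}(subnK le_in) /emb !rmorphM !rmorphXn /= exprD expr_div_n.
by rewrite -mulrA [_ ^+ i * _]mulrC divfK // mulrC.
Qed.

Lemma scale_evalset_denom (R : idomainType) (a b : R) n : b != 0 ->
  Defs.subset (scaleset (emb (b ^+ n)) (evalset (emb a / emb b) n)) (@Rset R).
Proof.
move=> b0 _ [_ [[q [sq ->]] ->]].
rewrite (horner_coef_wide _ (n := n)) ?size_map_poly_emb // mulr_sumr.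
have [R0 RD _] := @submodule_Rset R.
apply: (big_ind (@Rset R)) => // i _.
rewrite map_poly_emb_coef mulrCA emb_denom_exp ?(ltnW (ltn_ord i)) //.
exact/RsetM/Rset_emb/Rset_emb.
Qed.

Section IntegralElement.
Variables (R : idomainType) (p : {poly R}) (x : K R).
Hypotheses (p_monic : p \is monic) (p_root : root (map_poly (@emb R) p) x).
Local Notation E := (evalset x (size p)).

Lemma horner_modp (q : {poly R}) :
  (map_poly (@emb R) q).[x] = (map_poly (@emb R) (q %% p)).[x].
Proof.
have := Pdiv.Idomain.divp_eq q p; rewrite (monicP p_monic) expr1n scale1r => {1}->.
rewrite /emb rmorphD rmorphM /= hornerD hornerM.
by move: p_root; rewrite /root /emb => /eqP ->; rewrite mulr0 add0r.
Qed.

Lemma evalset_horner (q : {poly R}) : E ((map_poly (@emb R) q).[x]).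
Proof.
exists (q %% p); split; last exact: horner_modp.
exact/ltnW/Pdiv.Idomain.ltn_modpN0/monic_neq0.
Qed.

Lemma size_monic_root_gt1 : (1 < size p)%N.
Proof.
rewrite ltnNge; apply/negP => /size1_polyC pC.
have p1 : p = 1.
  by have := monicP p_monic; rewrite {1}pC lead_coefC => p0; rewrite pC p0.
by move: p_root; rewrite p1 /root /emb rmorph1 hornerC oner_eq0.
Qed.

Lemma mulset_evalset : mulset E E = E.
Proof.
have [E0 ED _] := submodule_evalset x (size p).
apply: seteq_eq => y; split.
  apply: mulset_sub => // _ _ [q1 [_ ->]] [q2 [_ ->]].
  by rewrite -hornerM -rmorphM; exact: evalset_horner.
move=> Ey; rewrite -[y]mulr1; apply: mulset_pair => //.
exact/evalset1/ltnW/size_monic_root_gt1.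
Qed.

End IntegralElement.

Theorem lemma1p3 (R : idomainType) (st : kset R -> kset R) :
  is_star st ->
  (forall I : kset R, ideal I -> nonzeroset I -> fin_gen I -> star_basic st I) ->
  integrally_closed R.
Proof.
move=> st_star basic x [p [p_monic p_root]].
have [a [b [b0 xE]]] := frac_repr x.
have N_gt1 := size_monic_root_gt1 p_monic p_root.
have N_gt0 := ltnW N_gt1.
set c := emb (b ^+ size p).
have c0 : c != 0 by rewrite /c /emb tofrac_eq0 expf_neq0.
set E := evalset x (size p); set I := scaleset c E; set J := scaleset c (@Rset R).
have IR : Defs.subset I (@Rset R) by rewrite /I /E xE; exact: scale_evalset_denom.
have I_ideal : ideal I by split=> //; exact/submodule_scaleset/submodule_evalset.
have I_nz : nonzeroset I.
  by exists c; split=> //; exists 1; rewrite mulr1; split=> //; exact: evalset1.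
have J_red : star_reduction st J I.
  split; first exact: scaleset_Rset_ideal.
  - by exists c; split=> //; exists 1; rewrite mulr1; split=> //; exact: Rset1.
  - by move=> _ [_ [[r ->] ->]]; exists (emb r); split=> //; exact: evalset_emb.
  - by exists 1%N; rewrite scaleset_ring_reduction ?mulset_evalset //; exact: submodule_evalset.
have := basic I I_ideal I_nz (fin_gen_scale_evalset IR) J J_red.
rewrite star_scaleset_Rset // => stIJ.
have cxI : I (c * x) by exists x; split=> //; rewrite -[x]expr1; exact: evalset_exp.
have [_ _ st_ext _ _] := st_star.
have [_ [[r ->] /(mulfI c0) ->]] := (stIJ _).2 (st_ext I (frac_ideal_ideal I_ideal I_nz) _ cxI).
exact: Rset_emb.
Qed.
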